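(* Let $A$ be a deterministic parity tree automaton and $p$ a productive state of $A$. Then there exist a state $q$, a path $\pi_p$ from $p$ to $q$, and two branching paths $\pi_q^0,\pi_q^1$, each leading from $q$ to $q$, such that both $\pi_q^0$ and $\pi_q^1$ are accepting loops.
   Context: Deterministic parity tree automata: total $\delta:Q\times\Sigma\to Q\times Q$, edges $p\xrightarrow{\sigma,d}q$ with direction $d\in\{0,1\}$. A run is accepting if on every path the highest rank occurring infinitely often is even. A state is productive if it occurs in some accepting run (of the automaton from its initial state). A loop is a path returning to its starting state; it is accepting iff the maximal rank on it is even. Two paths from a common state are branching iff they agree on an initial segment of (letter, direction) pairs and then take the same letter in different directions. *)

From mathcomp Require Import all_boot.
Set Implicit Arguments. Unset Strict Implicit. Unset Printing Implicit Defensive.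

(* A deterministic parity tree automaton over a finite alphabet Sigma:
   finite set of states, an initial state, a total transition function
   delta : Q -> Sigma -> Q * Q (first component = direction 0 = false,
   second component = direction 1 = true) and a rank on states. *)
Record DPTA (Sigma : finType) := {
  state :> finType;
  init : state;
  delta : state -> Sigma -> state * state;
  rank : state -> nat
}.

Section Defs.
Variables (Sigma : finType) (A : DPTA Sigma).

Definition step (p : A) (e : Sigma * bool) : A :=
  if e.2 then (delta p e.1).2 else (delta p e.1).1.

Definition path_end (p : A) (pi : seq (Sigma * bool)) : A := foldl step p pi.

Definition path_states (p : A) (pi : seq (Sigma * bool)) : seq A :=
  scanl step p pi.

Definition path_max_rank (p : A) (pi : seq (Sigma * bool)) : nat :=
  foldr maxn 0 (map (@rank _ A) (p :: path_states p pi)).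

Definition is_loop (q : A) (pi : seq (Sigma * bool)) : Prop :=
  path_end q pi = q.

Definition accepting_loop (q : A) (pi : seq (Sigma * bool)) : Prop :=
  is_loop q pi /\ ~~ odd (path_max_rank q pi).

Definition branching (pi0 pi1 : seq (Sigma * bool)) : Prop :=
  exists (u : seq (Sigma * bool)) (a : Sigma) (d0 d1 : bool)
         (r0 r1 : seq (Sigma * bool)),
    [/\ d0 != d1, pi0 = u ++ (a, d0) :: r0 & pi1 = u ++ (a, d1) :: r1].

Definition tree := seq bool -> Sigma.

Definition tree_path (t : tree) (w : seq bool) : seq (Sigma * bool) :=
  [seq (t (take i w), nth false w i) | i <- iota 0 (size w)].

Definition run (t : tree) (w : seq bool) : A := path_end (init A) (tree_path t w).

Definition parity_ok (f : nat -> nat) : Prop :=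
  exists m, [/\ ~~ odd m,
     (forall N, exists n, N <= n /\ f n = m) &
     (exists N, forall n, N <= n -> f n <= m)].

Definition accepting_run (t : tree) : Prop :=
  forall b : nat -> bool, parity_ok (fun n => rank (run t (mkseq b n))).

Definition productive (p : A) : Prop :=
  exists t : tree, accepting_run t /\ exists w, run t w = p.

End Defs.

From mathcomp Require Import all_boot zify.
From Stdlib Require Import ClassicalEpsilon.
Set Implicit Arguments. Unset Strict Implicit. Unset Printing Implicit Defensive.

(* Let t be a tree with an accepting run visiting p at the
   node w.  Call an edge (t v, d) leaving the node v "looping" when it is the
   first edge of an accepting loop at run t v.  If some descendant v of w has
   looping edges in both directions, the two loops branch after the empty
   prefix and v is reachable from p, which is the claim.  Otherwise a choice
   function c can always pick a non-looping direction below w.  We show that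
   this is impossible: on the branch following w and then c, the parity
   condition gives an even rank m that is eventually maximal and recurs
   infinitely often; by pigeonhole two rank-m positions i < j beyond w carry
   the same state, and the segment between them is an accepting loop whose
   first edge was chosen by c. *)

Lemma recurrence_repeats (T : finType) (f : nat -> T) (P : nat -> Prop) (K : nat) :
  (forall N, exists n, N <= n /\ P n) ->
  exists i j, [/\ K <= i, i < j, P i & f i = f j].
Proof.
move=> Hrec.
have positions k : exists s : seq nat,
    [/\ size s = k, uniq s & forall n, n \in s -> K <= n /\ P n].
  elim: k => [|k [s [Hsize Huniq Hs]]]; first by exists [::].
  have [n [Hn Pn]] := Hrec (K + (\max_(x <- s) x).+1).
  exists (n :: s); split => /=; first by rewrite Hsize.
    rewrite Huniq andbT; apply/negP => /(leq_bigmax_seq (F := id)) /(_ isT) /= Hle.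
    lia.
  by move=> x; rewrite in_cons => /orP[/eqP-> | /Hs //]; split => //; lia.
have [s [Hsize Huniq Hs]] := positions #|T|.+1.
have : ~~ uniq (map f s).
  apply/negP => /card_uniqP; rewrite size_map Hsize => Hcard.
  by have := max_card (mem (map f s)); rewrite Hcard ltnn.
case/(uniqPn (f 0)) => a [b [ab]]; rewrite size_map => bs.
rewrite !(nth_map 0) ?(ltn_trans ab) // => Hf.
have Hab : nth 0 s a != nth 0 s b by rewrite nth_uniq ?(ltn_trans ab) ?ltn_eqF.
have [Ka Pa] := Hs _ (mem_nth 0 (ltn_trans ab bs)).
have [Kb Pb] := Hs _ (mem_nth 0 bs).
have [lt|gt|eq] := ltngtP (nth 0 s a) (nth 0 s b).
- by exists (nth 0 s a), (nth 0 s b).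
- by exists (nth 0 s b), (nth 0 s a).
- by rewrite eq eqxx in Hab.
Qed.

Lemma foldr_maxn_eq (l : seq nat) (m : nat) :
  (forall x, x \in l -> x <= m) -> m \in l -> foldr maxn 0 l = m.
Proof.
move=> Hle Hin; apply/eqP; rewrite eqn_leq; apply/andP; split.
  elim: l Hle {Hin} => //= x l IH Hle; rewrite geq_max Hle ?mem_head //=.
  by apply: IH => y Hy; apply: Hle; rewrite in_cons Hy orbT.
elim: l Hin {Hle} => //= x l IH; rewrite in_cons => /orP[/eqP-> | Hl].
  exact: leq_maxl.
exact: leq_trans (IH Hl) (leq_maxr _ _).
Qed.

Section Runs.
Variables (Sigma : finType) (A : DPTA Sigma).

Lemma tree_path_rcons (t : tree Sigma) (v : seq bool) (d : bool) :
  tree_path t (rcons v d) = rcons (tree_path t v) (t v, d).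
Proof.
rewrite /tree_path size_rcons -addn1 iotaD map_cat /= add0n cats1.
congr rcons; last by rewrite -cats1 take_size_cat // nth_cat ltnn subnn.
apply/eq_in_map => i; rewrite mem_iota => /andP[_ hi].
by rewrite -cats1 takel_cat ?(ltnW hi) // nth_cat hi.
Qed.

Lemma run_rcons (t : tree Sigma) (v : seq bool) (d : bool) :
  run A t (rcons v d) = step (run A t v) (t v, d).
Proof. by rewrite /run tree_path_rcons /path_end foldl_rcons. Qed.

Lemma run_extension (t : tree Sigma) (w x : seq bool) :
  exists pi, run A t (w ++ x) = path_end (run A t w) pi.
Proof.
elim/last_ind: x => [|x d [pi Hpi]]; first by exists [::]; rewrite cats0.
exists (rcons pi (t (w ++ x), d)).
by rewrite -rcons_cat run_rcons Hpi /path_end foldl_rcons.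
Qed.

Fixpoint branch (dir : seq bool -> bool) (n : nat) : seq bool :=
  if n is n'.+1 then rcons (branch dir n') (dir (branch dir n')) else [::].

Lemma size_branch (dir : seq bool -> bool) (n : nat) : size (branch dir n) = n.
Proof. by elim: n => //= n IH; rewrite size_rcons IH. Qed.

Lemma mkseq_branch (dir : seq bool -> bool) (n : nat) :
  mkseq (fun k => dir (branch dir k)) n = branch dir n.
Proof.
elim: n => //= n IH.
by rewrite /mkseq -addn1 iotaD map_cat /= add0n cats1 -IH.
Qed.

Section BranchThrough.
Variables (dir : seq bool -> bool) (w : seq bool).
Hypothesis dir_follows : forall v, size v < size w -> dir v = nth false w (size v).

Lemma branch_take (k : nat) : k <= size w -> branch dir k = take k w.
Proof.
elim: k => [|k IH] hk /=; first by rewrite take0.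
by rewrite IH ?(ltnW hk) // dir_follows size_take hk // (take_nth false hk).
Qed.

Lemma branch_extends (n : nat) : size w <= n -> exists x, branch dir n = w ++ x.
Proof.
move=> hn; rewrite -(subnKC hn); elim: (n - size w) => [|k [x Hx]].
  by exists [::]; rewrite addn0 cats0 branch_take // take_size.
by exists (rcons x (dir (branch dir (size w + k)))); rewrite addnS /= Hx rcons_cat.
Qed.

End BranchThrough.

Section Segments.
Variables (st : nat -> A) (e : nat -> Sigma * bool).
Hypothesis st_step : forall k, st k.+1 = step (st k) (e k).

Definition segment (i k : nat) : seq (Sigma * bool) := map e (iota i k).

Lemma segment_end (i k : nat) : path_end (st i) (segment i k) = st (i + k).
Proof.
elim: k i => [|k IH] i /=; first by rewrite addn0.
by rewrite /path_end /= -st_step -addSnnS; apply: IH.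
Qed.

Lemma segment_states (i k : nat) :
  path_states (st i) (segment i k) = map st (iota i.+1 k).
Proof.
elim: k i => //= k IH i; rewrite /path_states /= -st_step; congr cons; exact: IH.
Qed.

Lemma segment_accepting_loop (i k m : nat) :
  st (i + k) = st i -> rank (st i) = m -> ~~ odd m ->
  (forall n, i <= n -> rank (st n) <= m) ->
  accepting_loop (st i) (segment i k).
Proof.
move=> Hloop Hm Heven Hmax; split; first by rewrite /is_loop segment_end.
rewrite /path_max_rank segment_states (@foldr_maxn_eq _ m) //; last first.
  by apply/mapP; exists (st i); rewrite ?mem_head.
move=> r /mapP [s Hs ->]; move: Hs; rewrite in_cons => /orP[/eqP-> | ].
  exact: Hmax.
by case/mapP => n; rewrite mem_iota => /andP[Hn _] ->; apply: Hmax; lia.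
Qed.

End Segments.

Definition loop_edge (t : tree Sigma) (v : seq bool) (d : bool) : Prop :=
  exists r, accepting_loop (run A t v) ((t v, d) :: r).

Definition reaches_branching_loops (p : A) : Prop :=
  exists (q : A) (pi_p pi0 pi1 : seq (Sigma * bool)),
    [/\ path_end p pi_p = q, branching pi0 pi1,
        accepting_loop q pi0 & accepting_loop q pi1].

Lemma branching_loops_at (t : tree Sigma) (w x : seq bool) (p : A) :
  run A t w = p -> loop_edge t (w ++ x) false -> loop_edge t (w ++ x) true ->
  reaches_branching_loops p.
Proof.
move=> Hw [r0 H0] [r1 H1]; have [pi Hpi] := run_extension t w x.
exists (run A t (w ++ x)), pi, ((t (w ++ x), false) :: r0), ((t (w ++ x), true) :: r1).
split => //; first by rewrite -Hw Hpi.
by exists [::], (t (w ++ x)), false, true, r0, r1.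
Qed.

Lemma accepting_run_loop_edge (t : tree Sigma) (w : seq bool) (c : seq bool -> bool) :
  accepting_run A t -> exists x, loop_edge t (w ++ x) (c (w ++ x)).
Proof.
move=> Hacc.
pose dir v := if size v < size w then nth false w (size v) else c v.
have dir_follows v : size v < size w -> dir v = nth false w (size v).
  by move=> Hv; rewrite /dir Hv.
pose st k := run A t (branch dir k).
pose e k := (t (branch dir k), dir (branch dir k)).
have st_step k : st k.+1 = step (st k) (e k) by rewrite /st /= run_rcons.
have [m [Heven Hrec [N Hmax]]] := Hacc (fun k => dir (branch dir k)).
have Hrec' M : exists n, M <= n /\ rank (st n) = m.
  by have [n] := Hrec M; rewrite mkseq_branch; exists n.
(* A repeated state at rank-m positions i < j beyond N and below w. *)
have [i [j [Hi Hij Hm Hst]]] := recurrence_repeats st (maxn N (size w)) Hrec'.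
have [x Hx] := branch_extends dir_follows (leq_trans (leq_maxr N _) Hi).
have [k Hj] : exists k, j = i + k.+1 by exists (j - i).-1; lia.
have Hc : dir (branch dir i) = c (branch dir i).
  by rewrite /dir size_branch ltnNge (leq_trans (leq_maxr N _) Hi).
(* The segment from i to j is an accepting loop whose first edge is chosen by c. *)
exists x; rewrite -Hx -Hc; exists (segment e i.+1 k).
apply: (segment_accepting_loop st_step (k := k.+1) (m := m)) => //; first by rewrite -Hj.
by move=> n Hn; have := Hmax n; rewrite mkseq_branch; apply; lia.
Qed.

End Runs.

Theorem lemma12p1 (Sigma : finType) (A : DPTA Sigma) (p : A) :
  productive p ->
  exists (q : A) (pi_p pi0 pi1 : seq (Sigma * bool)),
    [/\ path_end p pi_p = q, branching pi0 pi1,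
        accepting_loop q pi0 & accepting_loop q pi1].
Proof.
move=> [t [Hacc [w Hw]]].
(* Prefer the direction 1 exactly where direction 0 is looping. *)
pose c v := if excluded_middle_informative (loop_edge A t v false) then true else false.
have [x] := accepting_run_loop_edge w c Hacc.
rewrite /c; case: excluded_middle_informative => [Hfalse Htrue | _ Hfalse] //.
exact: (branching_loops_at Hw Hfalse Htrue).
Qed.
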